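(* Let $n\ge r\ge1$, let $\mathcal{O}\subset\mathbb{R}^{n\times r}$ be open with ${\rm St}(n,r)\subset\mathcal{O}$, let $f:\mathcal{O}\to\mathbb{R}$ be continuously differentiable, and consider (P): $\min_{X\in\mathcal{S}_{+}^{n,r}}f(X)$. Fix $\gamma>0$. Suppose that every global (respectively, local) minimizer of (P) has no zero rows when $n>r>1$, and that for every global (respectively, local) minimizer $X^*$ of (P) there exist $\delta'>0$ and $L'>0$ such that for all $X\in{\rm St}(n,r)$ with $\|X-X^*\|_F\le\delta'$ and all $\overline{X}\in{\rm Proj}_{\mathcal{S}_{+}^{n,r}}(X)$, \[ f(X)-f(\overline{X})\ge -L'\|X-\overline{X}\|_F^2. \] Then for every global (respectively, local) minimizer $X^*$ of (P): 1. if $n=r$ or $n>r=1$, with $\kappa'>0$ a constant such that ${\rm dist}(Z,\mathcal{S}_{+}^{n,r})\le\kappa'{\rm dist}(Z,\mathbb{R}_{+}^{n\times r})$ for all $Z\in{\rm St}(n,r)$, there exists $\delta>0$ such that for all $X\in{\rm St}(n,r)$ with $\|X-X^*\|_F\le\delta$, $f(X)-f(X^* )+2\gamma(\kappa')^2L'\,e_\gamma\vartheta(X)\ge0$; 2. if $n>r>1$, with $\kappa:=\frac{2.1\sqrt{r}[1+3r(n-r)]}{X^*_{i^*j^*}}$ ($X^*_{i^*j^*}$ the smallest nonzero entry of $X^*$), there exists $\delta>0$ such that for all $\epsilon\ge0$ and all $X\in\mathcal{G}_\epsilon:=\{X\in{\rm St}(n,r): e_\gamma\vartheta(X)=\epsilon\}$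 with $\|X-X^*\|_F\le\delta$, $f(X)-f(X^* )+2\gamma\kappa^2L'\,e_\gamma\vartheta(X)\ge0$. Consequently, there exists $\widehat{\rho}>0$ such that for every $\rho\ge\widehat{\rho}$ the problem $\min_{X\in{\rm St}(n,r)}\{f(X)+\rho\, e_\gamma\vartheta(X)\}$ has the same set of global optimal solutions as (P).
   Context: ${\rm St}(n,r):=\{X\in\mathbb{R}^{n\times r}: X^\top X=I_r\}$, $\mathbb{R}_{+}^{n\times r}$ the entrywise nonnegative matrices, $\mathcal{S}_{+}^{n,r}:=\mathbb{R}_{+}^{n\times r}\cap{\rm St}(n,r)$, ${\rm dist}$ the Frobenius-norm distance and ${\rm Proj}_{\Omega}(X)$ the (set of) nearest points of $\Omega$ to $X$ in Frobenius norm. $\vartheta(X):=\sum_{i,j}\max(0,-X_{ij})$, and $e_\gamma\vartheta(X):=\min_{Z\in\mathbb{R}^{n\times r}}\{\frac{1}{2\gamma}\|Z-X\|_F^2+\vartheta(Z)\}$ is its Moreau envelope. *)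

From HB Require Import structures.
From mathcomp Require Import all_boot all_order all_algebra.
From mathcomp Require Import all_classical all_reals all_analysis.
Set Implicit Arguments. Unset Strict Implicit. Unset Printing Implicit Defensive.
Import Order.TTheory GRing.Theory Num.Theory.
Import numFieldNormedType.Exports.
Local Open Scope classical_set_scope.
Local Open Scope ring_scope.

Section Defs.
Variables (R : realType) (n r : nat).
Notation M := 'M[R]_(n, r).

Definition frob (X : M) : R := Num.sqrt (\sum_i \sum_j X i j ^+ 2).

Definition Stiefel : set M := [set X | X^T *m X = 1%:M].
Definition Nonneg : set M := [set X | forall i j, 0 <= X i j].
Definition Splus : set M := Nonneg `&` Stiefel.

Definition dist (X : M) (S : set M) : R := inf [set frob (X - Y) | Y in S].

Definition is_proj (S : set M) (X Xbar : M) : Prop :=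
  S Xbar /\ forall Y, S Y -> frob (X - Xbar) <= frob (X - Y).

Definition vartheta (X : M) : R := \sum_i \sum_j Num.max 0 (- X i j).

(* Moreau envelope e_gamma vartheta (the min is attained, so inf = min) *)
Definition moreau (gamma : R) (X : M) : R :=
  inf [set (2 * gamma)^-1 * frob (Z - X) ^+ 2 + vartheta Z | Z in [set: M]].

Definition min_nonzero_entry (X : M) : R :=
  inf [set x | exists i j, x = X i j /\ x != 0].

Definition global_min (f : M -> R) (X : M) : Prop :=
  Splus X /\ forall Y, Splus Y -> f X <= f Y.
Definition local_min (f : M -> R) (X : M) : Prop :=
  Splus X /\ exists e : R, 0 < e /\
    forall Y, Splus Y -> frob (Y - X) <= e -> f X <= f Y.

Definition growth_cond (f : M -> R) (Xs : M) (delta' L' : R) : Prop :=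
  0 < delta' /\ 0 < L' /\
  forall X Xbar, Stiefel X -> frob (X - Xs) <= delta' -> is_proj Splus X Xbar ->
    f X - f Xbar >= - L' * frob (X - Xbar) ^+ 2.

Definition hyps (ismin : M -> Prop) (f : M -> R) : Prop :=
  ((r < n)%N -> (1 < r)%N -> forall X, ismin X -> forall i, exists j, X i j != 0)
  /\ (forall X, ismin X -> exists delta' L', growth_cond f X delta' L').

Definition concl (ismin : M -> Prop) (f : M -> R) (gamma : R) : Prop :=
  forall Xs, ismin Xs -> forall delta' L', growth_cond f Xs delta' L' ->
  ((n = r \/ ((r < n)%N /\ r = 1%N)) ->
     forall kappa' : R, 0 < kappa' ->
     (forall Z, Stiefel Z -> dist Z Splus <= kappa' * dist Z Nonneg) ->
     exists delta : R, 0 < delta /\ forall X, Stiefel X -> frob (X - Xs) <= delta ->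
       f X - f Xs + 2 * gamma * kappa' ^+ 2 * L' * moreau gamma X >= 0)
  /\
  (((r < n)%N /\ (1 < r)%N) ->
     let kappa := (21 / 10) * Num.sqrt (r%:R) * (1 + 3 * (r * (n - r))%N%:R)
                  / min_nonzero_entry Xs in
     exists delta : R, 0 < delta /\ forall eps : R, 0 <= eps ->
       forall X, Stiefel X -> moreau gamma X = eps -> frob (X - Xs) <= delta ->
       f X - f Xs + 2 * gamma * kappa ^+ 2 * L' * moreau gamma X >= 0).

Definition penalty_global_min (f : M -> R) (gamma rho : R) (X : M) : Prop :=
  Stiefel X /\ forall Y, Stiefel Y ->
    f X + rho * moreau gamma X <= f Y + rho * moreau gamma Y.

Definition C1_on (O : set M) (f : M -> R) : Prop :=
  (forall X, O X -> differentiable f X) /\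
  (forall i j, {within O, continuous (fun X => 'D_(delta_mx i j) f X)}).

End Defs.

From HB Require Import structures.
From mathcomp Require Import all_boot all_order all_algebra.
From mathcomp Require Import all_classical all_reals all_analysis.
From mathcomp Require Import ring lra zify.
Import Order.TTheory GRing.Theory Num.Theory.
Import numFieldNormedType.Exports.
Local Open Scope classical_set_scope.
Local Open Scope ring_scope.

Set Implicit Arguments. Unset Strict Implicit. Unset Printing Implicit Defensive.

(* Everything rests on local error bounds dist(X, S_+) <= K |X_-| for X in St(n,r)
   near a minimizer X*, where X_- is the entrywise negative part.  Near S_+ one has
   |X_-|^2 <= 2 gamma e_gamma(X), so the growth condition at a projection Xbar of X
   gives f X >= f Xbar - L' dist(X, S_+)^2 >= f X* - 2 gamma K^2 L' e_gamma(X).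
   When every row of X* is nonzero (n > r > 1, or n = r), each row has exactly one
   nonzero entry; renormalising the columns of the on-support part of X yields a
   point of S_+ within (9/8) |off-support part| of X, and expanding the Stiefel
   identity |X 1|^2 = |X|^2 row by row bounds the off-support part by
   4 |X_-|_1 / X*_{i*j*}.  For r = 1 the renormalised positive part does the job.
   Exactness of the penalty follows by covering the compact St(n,r): near a global
   minimizer use the inequality above, near other feasible points continuity of f,
   and near infeasible points the positive lower bound on e_gamma. *)

Section RealFacts.
Variable R : realDomainType.

Lemma ler_term_sum (I : finType) (F : I -> R) i0 :
  (forall i, 0 <= F i) -> F i0 <= \sum_i F i.
Proof. by move=> F0; rewrite (bigD1 i0) //= lerDl sumr_ge0. Qed.

Lemma sum_sqr_le_sqr_sum (I : Type) (s : seq I) (c : I -> R) :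
  (forall i, 0 <= c i) -> \sum_(i <- s) c i ^+ 2 <= (\sum_(i <- s) c i) ^+ 2.
Proof.
move=> c0; elim: s => [|a s IH]; first by rewrite !big_nil expr0n.
rewrite !big_cons sqrrD.
have : 0 <= c a * \sum_(i <- s) c i by rewrite mulr_ge0 // sumr_ge0.
have := c0 a; lra.
Qed.

Lemma max0N_eq0 (x : R) : 0 <= x -> Num.max 0 (- x) = 0.
Proof. by move=> x0; apply/max_idPl; rewrite oppr_le0. Qed.

Lemma max0N_eqN (x : R) : x <= 0 -> Num.max 0 (- x) = - x.
Proof. by move=> x0; apply/max_idPr; rewrite oppr_ge0. Qed.

Lemma max0N_ge0 (x : R) : 0 <= Num.max 0 (- x).
Proof. by rewrite le_max lexx. Qed.

End RealFacts.

Section Frobenius.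
Variables (R : realType) (n r : nat).
Implicit Types (A B X Y : 'M[R]_(n, r)).

Definition frob2 X : R := \sum_i \sum_j X i j ^+ 2.
Definition mxdot A B : R := \sum_i \sum_j A i j * B i j.
Definition l1norm X : R := \sum_i \sum_j `|X i j|.

Lemma frob2_ge0 X : 0 <= frob2 X.
Proof. by apply: sumr_ge0 => i _; apply: sumr_ge0 => j _; exact: sqr_ge0. Qed.

Lemma frobE X : frob X = Num.sqrt (frob2 X). Proof. by []. Qed.

Lemma frob_ge0 X : 0 <= frob X. Proof. exact: sqrtr_ge0. Qed.

Lemma sqr_frob X : frob X ^+ 2 = frob2 X.
Proof. by rewrite sqr_sqrtr // frob2_ge0. Qed.

Lemma frob2D A B : frob2 (A + B) = frob2 A + 2 * mxdot A B + frob2 B.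
Proof.
rewrite /frob2 /mxdot mulr_sumr -!big_split; apply: eq_bigr => i _.
rewrite mulr_sumr -!big_split; apply: eq_bigr => j _; rewrite !mxE /=; ring.
Qed.

Lemma frob2Z t B : frob2 (t *: B) = t ^+ 2 * frob2 B.
Proof.
rewrite /frob2 mulr_sumr; apply: eq_bigr => i _.
rewrite mulr_sumr; apply: eq_bigr => j _; rewrite !mxE; ring.
Qed.

Lemma mxdotZr t A B : mxdot A (t *: B) = t * mxdot A B.
Proof.
rewrite /mxdot mulr_sumr; apply: eq_bigr => i _.
rewrite mulr_sumr; apply: eq_bigr => j _; rewrite !mxE; ring.
Qed.

Lemma mxdot0r A : mxdot A 0 = 0.
Proof. by apply: big1 => i _; apply: big1 => j _; rewrite mxE mulr0. Qed.

Lemma frob2_eq0 X : frob2 X = 0 -> X = 0.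
Proof.
move=> X0; apply/matrixP => i j; rewrite mxE.
have rowi := psumr_eq0P (fun i _ => sumr_ge0 _ (fun j _ => sqr_ge0 (X i j))) X0 (i := i) isT.
by apply/eqP; rewrite -sqrf_eq0; apply/eqP/(psumr_eq0P _ rowi) => // k _; exact: sqr_ge0.
Qed.

Lemma mxdot_sqr_le A B : mxdot A B ^+ 2 <= frob2 A * frob2 B.
Proof.
have [B0|B0] := eqVneq (frob2 B) 0.
  by rewrite (frob2_eq0 B0) mxdot0r expr0n /= mulr_ge0 // frob2_ge0.
have Bpos : 0 < frob2 B by rewrite lt0r B0 frob2_ge0.
have := frob2_ge0 (A + (- (mxdot A B / frob2 B)) *: B).
rewrite frob2D frob2Z mxdotZr.
have -> : frob2 A + 2 * (- (mxdot A B / frob2 B) * mxdot A B) +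
    (- (mxdot A B / frob2 B)) ^+ 2 * frob2 B = frob2 A - mxdot A B ^+ 2 / frob2 B.
  by field.
by rewrite subr_ge0 ler_pdivrMr.
Qed.

Lemma mxdot_le A B : mxdot A B <= frob A * frob B.
Proof.
apply: le_trans (ler_norm _) _.
rewrite -sqrtr_sqr !frobE -sqrtrM ?frob2_ge0 // ler_sqrt ?mxdot_sqr_le //.
by rewrite mulr_ge0 // frob2_ge0.
Qed.

Lemma frobD A B : frob (A + B) <= frob A + frob B.
Proof.
rewrite -(ger0_norm (addr_ge0 (frob_ge0 A) (frob_ge0 B))) -sqrtr_sqr.
rewrite [frob (A + B)]frobE ler_sqrt ?sqr_ge0 // sqrrD !sqr_frob frob2D.
have := mxdot_le A B; lra.
Qed.

Lemma frobZ t X : frob (t *: X) = `|t| * frob X.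
Proof. by rewrite !frobE frob2Z sqrtrM ?sqr_ge0 // sqrtr_sqr. Qed.

Lemma frobN X : frob (- X) = frob X.
Proof. by rewrite -scaleN1r frobZ normrN normr1 mul1r. Qed.

Lemma frob0 : frob (0 : 'M[R]_(n, r)) = 0.
Proof. by rewrite -(scale0r 0) frobZ normr0 mul0r. Qed.

Lemma frob_distC A B : frob (A - B) = frob (B - A).
Proof. by rewrite -frobN opprB. Qed.

Lemma frob_sub_triangle A B C : frob (A - C) <= frob (A - B) + frob (B - C).
Proof. by have := frobD (A - B) (B - C); rewrite addrA subrK. Qed.

Lemma sqr_entry_le_frob2 X i j : X i j ^+ 2 <= frob2 X.
Proof.
apply: le_trans (ler_term_sum i (fun i => sumr_ge0 _ (fun j _ => sqr_ge0 (X i j)))).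
exact: (ler_term_sum j (fun j => sqr_ge0 (X i j))).
Qed.

Lemma entry_le_frob X i j : `|X i j| <= frob X.
Proof. by rewrite -sqrtr_sqr ler_sqrt ?sqr_entry_le_frob2 // frob2_ge0. Qed.

Lemma frob_le_l1norm X : frob X <= l1norm X.
Proof.
have l0 : 0 <= l1norm X by apply: sumr_ge0 => i _; apply: sumr_ge0.
rewrite -(ger0_norm l0) -sqrtr_sqr ler_sqrt ?sqr_ge0 // /frob2 /l1norm !pair_big /=.
apply: le_trans (sum_sqr_le_sqr_sum _ (fun p : 'I_n * 'I_r => normr_ge0 (X p.1 p.2))).
by apply: ler_sum => p _; rewrite real_normK // num_real.
Qed.

Lemma l1norm_le_frob X : l1norm X <= Num.sqrt (n * r)%:R * frob X.
Proof.
pose absX : 'M[R]_(n, r) := \matrix_(i, j) `|X i j|.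
pose ones : 'M[R]_(n, r) := const_mx 1.
have -> : l1norm X = mxdot ones absX.
  by apply: eq_bigr => i _; apply: eq_bigr => j _; rewrite !mxE mul1r.
have -> : Num.sqrt (n * r)%:R = frob ones.
  rewrite frobE; congr Num.sqrt.
  rewrite /frob2 (eq_bigr (fun _ => r%:R)) => [|i _].
    by rewrite sumr_const card_ord natrM mulrC mulr_natr.
  by under eq_bigr do rewrite mxE expr1n; rewrite sumr_const card_ord.
have -> : frob X = frob absX.
  congr Num.sqrt; apply: eq_bigr => i _; apply: eq_bigr => j _.
  by rewrite mxE real_normK // num_real.
exact: mxdot_le.
Qed.

End Frobenius.

Lemma scalar_moreau_lb (R : realFieldType) (g K x z : R) :
  0 < g -> g <= K -> - K <= x ->
  (2 * K)^-1 * Num.max 0 (- x) ^+ 2 <= (2 * g)^-1 * (z - x) ^+ 2 + Num.max 0 (- z).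
Proof.
move=> g0 gK xK; have K0 : 0 < K := lt_le_trans g0 gK.
set a := (2 * g)^-1; set b := (2 * K)^-1.
have b0 : 0 < b by rewrite invr_gt0 mulr_gt0.
have ba : b <= a by rewrite lef_pV2 ?posrE ?mulr_gt0 // ler_pM2l.
have bK : b * K * z * 2 = z by rewrite /b; field; rewrite gt_eqF.
have [x0|x0] := leP 0 x.
  rewrite max0N_eq0 // expr0n /= mulr0 addr_ge0 ?max0N_ge0 //.
  by rewrite mulr_ge0 ?sqr_ge0 // (le_trans (ltW b0) ba).
rewrite max0N_eqN ?(ltW x0) //.
have h1 : 0 <= (a - b) * (z - x) ^+ 2 by rewrite mulr_ge0 ?sqr_ge0 // subr_ge0.
have [z0|z0] := leP 0 z.
  rewrite max0N_eq0 //.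
  have h2 : 0 <= b * (z * (z - 2 * x)) by apply: mulr_ge0; [exact: ltW | apply: mulr_ge0; lra].
  lra.
rewrite max0N_eqN ?(ltW z0) //.
have h2 : 0 <= b * z * (z - 2 * x - 2 * K).
  by rewrite -mulrA; apply: mulr_ge0; [exact: ltW | rewrite nmulr_rge0 //; lra].
lra.
Qed.

Section NegativePart.
Variables (R : realType) (n r : nat).
Implicit Types (X Y : 'M[R]_(n, r)).

Definition negpart X : 'M[R]_(n, r) := \matrix_(i, j) Num.max 0 (- X i j).
Definition pospart X : 'M[R]_(n, r) := \matrix_(i, j) Num.max 0 (X i j).

Lemma pospart_Nonneg X : Nonneg (pospart X).
Proof. by move=> i j; rewrite mxE le_max lexx. Qed.

Lemma subr_pospart X : X - pospart X = - negpart X.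
Proof.
apply/matrixP => i j; rewrite !mxE.
have [x0|x0] := leP 0 (X i j).
  by rewrite max0N_eq0 // oppr0 subrr.
by rewrite max0N_eqN ?(ltW x0) // opprK subr0.
Qed.

Lemma frob2_pos_neg X : frob2 X = frob2 (pospart X) + frob2 (negpart X).
Proof.
rewrite /frob2 -big_split /=; apply: eq_bigr => i _; rewrite -big_split /=.
apply: eq_bigr => j _; rewrite !mxE.
have [x0|x0] := leP 0 (X i j).
  by rewrite max0N_eq0 // expr0n addr0.
by rewrite max0N_eqN ?(ltW x0) // expr0n add0r sqrrN.
Qed.

Lemma frob_negpart_le X Y : Nonneg Y -> frob (negpart X) <= frob (X - Y).
Proof.
move=> Y0; rewrite !frobE ler_sqrt ?frob2_ge0 //.
apply: ler_sum => i _; apply: ler_sum => j _; rewrite !mxE.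
have [x0|x0] := leP 0 (X i j); first by rewrite max0N_eq0 // expr0n /= sqr_ge0.
rewrite max0N_eqN ?(ltW x0) // sqrrN; have := Y0 i j; nra.
Qed.

Lemma Nonneg_negpart X : Nonneg X <-> frob2 (negpart X) = 0.
Proof.
split=> [X0|/frob2_eq0 N0 i j].
  by apply: big1 => i _; apply: big1 => j _; rewrite mxE max0N_eq0 ?expr0n.
have := congr1 (fun N : 'M[R]_(n, r) => N i j) N0; rewrite /= !mxE => /max_idPl.
by rewrite oppr_le0.
Qed.

End NegativePart.

Section MoreauEnvelope.
Variables (R : realType) (n r : nat) (g : R).
Hypothesis g_gt0 : 0 < g.
Implicit Types (X Z : 'M[R]_(n, r)).

Lemma vartheta_ge0 X : 0 <= vartheta X.
Proof. by apply: sumr_ge0 => i _; apply: sumr_ge0 => j _; exact: max0N_ge0. Qed.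

Lemma vartheta_Nonneg X : Nonneg X -> vartheta X = 0.
Proof. by move=> X0; apply: big1 => i _; apply: big1 => j _; rewrite max0N_eq0. Qed.

Let moreau_values X :=
  [set (2 * g)^-1 * frob (Z - X) ^+ 2 + vartheta Z | Z in [set: 'M[R]_(n, r)]].

Let moreau_values_ge0 X : lbound (moreau_values X) 0.
Proof.
move=> _ [Z _ <-]; rewrite addr_ge0 ?vartheta_ge0 // mulr_ge0 ?sqr_ge0 //.
by rewrite invr_ge0 mulr_ge0 // (ltW g_gt0).
Qed.

Lemma moreau_le X Z : moreau g X <= (2 * g)^-1 * frob (Z - X) ^+ 2 + vartheta Z.
Proof. by apply: ge_inf; [exists 0; exact: moreau_values_ge0 | exists Z]. Qed.

Lemma moreau_ge0 X : 0 <= moreau g X.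
Proof.
apply: lb_le_inf; last exact: moreau_values_ge0.
by exists ((2 * g)^-1 * frob (X - X) ^+ 2 + vartheta X), X.
Qed.

Lemma moreau_Nonneg X : Nonneg X -> moreau g X = 0.
Proof.
move=> X0; apply/le_anti; rewrite moreau_ge0 andbT.
by have := moreau_le X X; rewrite subrr frob0 vartheta_Nonneg // expr0n /= mulr0 addr0.
Qed.

Lemma moreau_ge_negpart (K : R) X : g <= K -> (forall i j, - K <= X i j) ->
  (2 * K)^-1 * frob2 (negpart X) <= moreau g X.
Proof.
move=> gK XK; apply: lb_le_inf.
  by exists ((2 * g)^-1 * frob (X - X) ^+ 2 + vartheta X), X.
move=> _ [Z _ <-]; rewrite sqr_frob /frob2 /vartheta !mulr_sumr -big_split /=.
apply: ler_sum => i _; rewrite !mulr_sumr -big_split /=.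
by apply: ler_sum => j _; rewrite !mxE; exact: scalar_moreau_lb.
Qed.

End MoreauEnvelope.

Section Distance.
Variables (R : realType) (n r : nat).
Implicit Types (X Y : 'M[R]_(n, r)) (S : set 'M[R]_(n, r)).

Let dist_values_ge0 X S : lbound [set frob (X - Y) | Y in S] 0.
Proof. by move=> _ [Y _ <-]; exact: frob_ge0. Qed.

Lemma dist_le X S Y : S Y -> dist X S <= frob (X - Y).
Proof. by move=> SY; apply: ge_inf; [exists 0; exact: dist_values_ge0 | exists Y]. Qed.

Lemma dist_proj X S Xb : is_proj S X Xb -> dist X S = frob (X - Xb).
Proof.
move=> [SXb Xb_min]; apply/le_anti; rewrite dist_le //=.
apply: lb_le_inf; first by exists (frob (X - Xb)), Xb.
by move=> _ [Y SY <-]; exact: Xb_min.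
Qed.

Lemma dist_Nonneg_le X : dist X (@Nonneg R n r) <= frob (negpart X).
Proof. by apply: le_trans (dist_le X (pospart_Nonneg X)) _; rewrite subr_pospart frobN. Qed.

End Distance.

Section StiefelFacts.
Variables (R : realType) (n r : nat).
Implicit Types (X : 'M[R]_(n, r)).

Lemma StiefelP X :
  Stiefel X <-> forall j k, \sum_i X i j * X i k = (j == k)%:R.
Proof.
have tmulE j k : (X^T *m X) j k = \sum_i X i j * X i k.
  by rewrite mxE; apply: eq_bigr => i _; rewrite mxE.
split=> [XtX j k|XtX]; first by rewrite -tmulE XtX mxE.
by apply/matrixP => j k; rewrite tmulE XtX mxE.
Qed.

Lemma Stiefel_col_sqr X j : Stiefel X -> \sum_i X i j ^+ 2 = 1.
Proof.
move=> /StiefelP /(_ j j); rewrite eqxx mulr1n => <-.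
by apply: eq_bigr => i _; rewrite expr2.
Qed.

Lemma Stiefel_entry_le1 X i j : Stiefel X -> `|X i j| <= 1.
Proof.
move=> /(Stiefel_col_sqr j) col1.
have : `|X i j| ^+ 2 <= 1.
  by rewrite real_normK ?num_real // -col1 (ler_term_sum i (fun i => sqr_ge0 (X i j))).
have := normr_ge0 (X i j); nra.
Qed.

(* [|X 1|^2 = 1^T X^T X 1 = 1^T 1 = |X|^2] *)
Lemma Stiefel_rowsum_sqr X : Stiefel X -> \sum_i (\sum_j X i j) ^+ 2 = frob2 X.
Proof.
move=> SX; have /StiefelP XtX := SX.
rewrite /frob2 [RHS]exchange_big /=.
under eq_bigr do rewrite expr2 mulr_suml; rewrite exchange_big /=.
apply: eq_bigr => j _.
under eq_bigr do rewrite mulr_sumr; rewrite exchange_big /=.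
under eq_bigr do rewrite XtX.
rewrite (bigD1 j) //= big1 ?addr0 => [|k]; last by rewrite eq_sym => /negbTE ->.
by rewrite eqxx Stiefel_col_sqr.
Qed.

Lemma Splus_row_support X i j k : Splus X -> X i j != 0 -> X i k != 0 -> j = k.
Proof.
move=> [X0 /StiefelP XtX] Xij Xik; apply/eqP; apply: contraT => jk.
have : 0 < X i j * X i k by apply: mulr_gt0; rewrite lt0r ?Xij ?Xik X0.
rewrite ltNge (le_trans (ler_term_sum i (fun i => mulr_ge0 (X0 i j) (X0 i k)))) //.
by rewrite XtX (negbTE jk).
Qed.

End StiefelFacts.

Lemma Stiefel_square_row_neq0 (R : realType) (n r : nat) (X : 'M[R]_(n, r)) :
  n = r -> Stiefel X -> forall i, exists j, X i j != 0.
Proof.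
move=> nr; subst r => /mulmx1C XXt i; apply: contrapT => row0.
have := congr1 (fun A : 'M[R]_n => A i i) XXt; rewrite /= !mxE eqxx big1 => [/eqP|j _].
  by rewrite eq_sym oner_eq0.
have /negPn/eqP -> : ~~ (X i j != 0) by apply/negP => Xij; apply: row0; exists j.
by rewrite mul0r.
Qed.

Section Topology.
Variables (R : realType) (n r : nat).
Implicit Types (X Y : 'M[R]_(n, r)).

Lemma continuous_sumr (T : topologicalType) (I : Type) (s : seq I) (F : I -> T -> R) :
  (forall i, continuous (F i)) -> continuous (fun x => \sum_(i <- s) F i x).
Proof.
move=> F_cont x; apply: (@cvg_big R^o I +%R 0 xpredT) => // [|i _].
  exact: add_continuous.
exact: F_cont.
Qed.

Lemma continuous_frob_sub X : continuous (fun Y => frob (X - Y)).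
Proof.
have frob2_cont : continuous (fun Y => frob2 (X - Y)).
  have -> : (fun Y => frob2 (X - Y)) =
      (fun Y => \sum_i \sum_j (X i j - Y i j) * (X i j - Y i j)).
    by apply/funext => Z; apply: eq_bigr => i _; apply: eq_bigr => j _; rewrite !mxE expr2.
  apply: continuous_sumr => i; apply: continuous_sumr => j Y.
  have sub_cont : {for Y, continuous (fun Z : 'M[R]_(n, r) => X i j - Z i j)}.
    by apply: continuousB; [exact: cst_continuous | exact: coord_continuous].
  exact: (continuousM sub_cont sub_cont).
by move=> Y; apply: continuous_comp (frob2_cont Y) _; exact: sqrt_continuous.
Qed.

Lemma continuous_frob2_negpart : continuous (fun X => frob2 (negpart X)).
Proof.
have -> : (fun X => frob2 (negpart X)) = (fun X : 'M[R]_(n, r) =>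
    \sum_i \sum_j Num.max 0 (- X i j) * Num.max 0 (- X i j)).
  by apply/funext => Z; apply: eq_bigr => i _; apply: eq_bigr => j _; rewrite !mxE expr2.
apply: continuous_sumr => i; apply: continuous_sumr => j X.
have max_cont : {for X, continuous (fun Y : 'M[R]_(n, r) => Num.max 0 (- Y i j))}.
  apply: (continuous_max (f := fun=> 0) (g := fun Y : 'M[R]_(n, r) => - Y i j)).
    exact: cst_continuous.
  by apply: continuousN; exact: coord_continuous.
exact: (continuousM max_cont max_cont).
Qed.

Lemma closed_Nonneg : closed (@Nonneg R n r).
Proof.
have -> : @Nonneg R n r =
    \bigcap_(p in [set: 'I_n * 'I_r]) (fun X => X p.1 p.2) @^-1` [set x | 0 <= x].
  by apply/seteqP; split => [X X0 p _|X X0 i j] /=; [exact: X0 | exact: (X0 (i, j))].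
apply: closed_bigI => p _; apply: preimage_closed => [X _|]; last exact: closed_ge.
exact: coord_continuous.
Qed.

Lemma closed_Stiefel : closed (@Stiefel R n r).
Proof.
have -> : @Stiefel R n r = \bigcap_(p in [set: 'I_r * 'I_r])
    (fun X => \sum_i X i p.1 * X i p.2) @^-1` [set x | x = (p.1 == p.2)%:R].
  apply/seteqP; split => [X /StiefelP XtX p _|X XtX] /=; first exact: XtX.
  by apply/StiefelP => j k; exact: (XtX (j, k)).
apply: closed_bigI => p _; apply: preimage_closed => [X _|]; last exact: closed_eq.
apply: continuous_sumr => i Y.
have coord_cont j : {for Y, continuous (fun Z : 'M[R]_(n, r) => Z i j)}.
  exact: coord_continuous.
exact: continuousM (coord_cont p.1) (coord_cont p.2).
Qed.

Lemma closed_Splus : closed (@Splus R n r).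
Proof. exact: closedI closed_Nonneg closed_Stiefel. Qed.

Lemma vec_mx_continuous : continuous (@vec_mx R n r).
Proof.
have vec_mxE v i j : vec_mx v i j = v 0 (mxvec_index i j).
  by rewrite -{2}(vec_mxK v) mxvecE.
move=> v; apply/(@cvg_ballP R _ _ (nbhs v) (nbhs_filter v)) => e e0; near=> w.
have [_ vw] : ball v e w by near: w; exact: nbhsx_ballx.
by split => // i j; rewrite !vec_mxE; exact: vw.
Unshelve. all: by end_near.
Qed.

Lemma compact_entries_le1 (A : set 'M[R]_(n, r)) :
  closed A -> (forall X, A X -> forall i j, `|X i j| <= 1) -> compact A.
Proof.
move=> A_closed A_le1.
have -> : A = vec_mx @` (vec_mx @^-1` A).
  by apply/seteqP; split => [X AX|_ [v Av <-] //]; exists (mxvec X); rewrite //= mxvecK.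
apply: continuous_compact; first exact: continuous_subspaceT vec_mx_continuous.
apply: bounded_closed_compact; last first.
  by apply: preimage_closed A_closed => v _; exact: vec_mx_continuous.
exists 1; split; first exact: num_real.
move=> K K1 v Av /=; rewrite [`|v|]/Num.norm /= mx_normrE.
apply: bigmax_le => [|[a k] _ /=]; first exact: le_trans ler01 (ltW K1).
rewrite (ord1 a); case: (mxvec_indexP k) => i j.
by rewrite -{1}(vec_mxK v) mxvecE (le_trans (A_le1 _ Av i j) (ltW K1)).
Qed.

Lemma compact_Stiefel : compact (@Stiefel R n r).
Proof.
by apply: compact_entries_le1 closed_Stiefel _ => X SX i j; exact: Stiefel_entry_le1.
Qed.

Lemma compact_Splus : compact (@Splus R n r).
Proof.
by apply: compact_entries_le1 closed_Splus _ => X [_ SX] i j; exact: Stiefel_entry_le1.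
Qed.

Lemma Splus_inhabited : (r <= n)%N -> exists X, @Splus R n r X.
Proof.
move=> rn; exists (\matrix_(i, j) ((i : nat) == j)%:R); split=> [i j|].
  by rewrite mxE ler0n.
apply/StiefelP => j k; rewrite (bigD1 (widen_ord rn j)) //= big1 ?addr0 => [|i ij].
  by rewrite !mxE eqxx mul1r.
rewrite !mxE; suff -> : ((i : nat) == j) = false by rewrite mul0r.
by apply/negbTE; apply: contra ij => /eqP ij; apply/eqP/val_inj.
Qed.

Lemma proj_Splus_exists X : (r <= n)%N -> exists Xb, is_proj (@Splus R n r) X Xb.
Proof.
move=> rn; have [Xb Xb_in Xb_min] := compact_EVT_min (Splus_inhabited rn) compact_Splus
  (continuous_subspaceT (continuous_frob_sub (X := X))).
by exists Xb; split=> [|Y SY]; [move: Xb_in; rewrite inE | apply: Xb_min; rewrite inE].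
Qed.

Lemma global_min_exists (f : 'M[R]_(n, r) -> R) : (r <= n)%N ->
  {in @Splus R n r, continuous f} -> exists Xs, global_min f Xs.
Proof.
move=> rn f_cont; have [Xs Xs_in Xs_min] := compact_EVT_min (Splus_inhabited rn)
  compact_Splus (continuous_in_subspaceT f_cont).
by exists Xs; split=> [|Y SY]; [move: Xs_in; rewrite inE | apply: Xs_min; rewrite inE].
Qed.

End Topology.

Section PenaltyFromErrorBound.
Variables (R : realType) (n r : nat).
Implicit Types (X Xs : 'M[R]_(n, r)).

Definition local_error_bound Xs (K : R) : Prop :=
  exists2 d : R, 0 < d & forall X, Stiefel X -> frob (X - Xs) <= d ->
    dist X (@Splus R n r) <= K * frob (negpart X).

Lemma frob2_negpart_le_moreau (g : R) X Xs : 0 < g -> Nonneg Xs ->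
  frob (X - Xs) <= g -> frob2 (negpart X) <= 2 * g * moreau g X.
Proof.
move=> g0 Xs0 XXs; rewrite -ler_pdivrMl ?mulr_gt0 //.
apply: moreau_ge_negpart => // i j.
have := le_trans (entry_le_frob (X - Xs) i j) XXs; rewrite !mxE ler_norml => /andP[lo _].
by have := Xs0 i j; lra.
Qed.

Lemma penalty_ineq_near (f : 'M[R]_(n, r) -> R) (g e d' L' K : R) Xs :
  (r <= n)%N -> 0 < g -> Splus Xs -> 0 < e ->
  (forall Y, Splus Y -> frob (Y - Xs) <= e -> f Xs <= f Y) ->
  growth_cond f Xs d' L' -> 0 <= K -> local_error_bound Xs K ->
  exists d : R, 0 < d /\ forall X, Stiefel X -> frob (X - Xs) <= d ->
    f X - f Xs + 2 * g * K ^+ 2 * L' * moreau g X >= 0.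
Proof.
move=> rn g0 SXs e0 Xs_min [d'0 [L'0 growth]] K0 [d0 d00 err_bound].
exists (Num.min d0 (Num.min d' (Num.min (e / 2) g))).
split=> [|X SX]; first by rewrite !lt_min d00 d'0 g0 divr_gt0.
rewrite !le_min => /and4P [Xd0 Xd' Xe Xg].
have [Xb Xb_proj] := proj_Splus_exists X rn; have [SXb Xb_min] := Xb_proj.
have fXb : f Xs <= f Xb.
  apply: Xs_min SXb (le_trans (frob_sub_triangle Xb X Xs) _).
  by rewrite frob_distC; have := Xb_min Xs SXs; lra.
have XXb : frob (X - Xb) <= K * frob (negpart X).
  by rewrite -(dist_proj Xb_proj); exact: err_bound.
have XXb2 : frob (X - Xb) ^+ 2 <= K ^+ 2 * (2 * g * moreau g X).
  apply: le_trans (ler_wpM2l (sqr_ge0 K) (frob2_negpart_le_moreau g0 SXs.1 Xg)).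
  rewrite -sqr_frob -exprMn lerXn2r ?nnegrE ?frob_ge0 ?mulr_ge0 ?frob_ge0 //.
have := growth X Xb SX Xd' Xb_proj.
have : L' * frob (X - Xb) ^+ 2 <= L' * (K ^+ 2 * (2 * g * moreau g X)).
  by rewrite ler_pM2l.
lra.
Qed.

End PenaltyFromErrorBound.

Section ColumnErrorBound.
Variables (R : realType) (n : nat).
Implicit Types (X Xs : 'M[R]_(n, 1)).

Lemma Stiefel_col_vectorP X : Stiefel X <-> frob2 X = 1.
Proof.
have frob2E : frob2 X = \sum_i X i 0 * X i 0.
  by apply: eq_bigr => i _; rewrite big_ord1 expr2.
rewrite StiefelP frob2E; split=> [/(_ 0 0)|XtX j k]; first by rewrite eqxx.
by rewrite !ord1 eqxx XtX.
Qed.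

(* Renormalise the positive part: [|X_+|^2 = 1 - |X_-|^2] makes [|X_+|] within [|X_-|] of 1. *)
Lemma local_error_bound_col Xs : Splus Xs -> local_error_bound Xs 2.
Proof.
move=> [Xs0 _]; exists (1 / 2) => // X SX XXs.
set F := frob (negpart X); set p := frob (pospart X).
have F_le : F <= 1 / 2 := le_trans (frob_negpart_le X Xs0) XXs.
have F0 : 0 <= F := frob_ge0 _.
have p0 : 0 <= p := frob_ge0 _.
have pF : p ^+ 2 + F ^+ 2 = 1.
  by rewrite !sqr_frob -frob2_pos_neg; exact/Stiefel_col_vectorP.
have p_gt0 : 0 < p.
  rewrite lt0r p0 andbT; apply/eqP => p_eq0.
  have : F ^+ 2 = 1 by rewrite -pF p_eq0 expr0n add0r.
  nra.
pose Y := p^-1 *: pospart X.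
have SY : Splus Y.
  split=> [i j|]; first by rewrite !mxE mulr_ge0 ?invr_ge0 // le_max lexx.
  by apply/Stiefel_col_vectorP; rewrite frob2Z -sqr_frob exprVn mulVf // sqrf_eq0 gt_eqF.
apply: le_trans (dist_le X SY) (le_trans (frob_sub_triangle X (pospart X) Y) _).
rewrite subr_pospart frobN -/F -{1}[pospart X]scale1r -scalerBl frobZ -/p.
have -> : `|1 - p^-1| * p = `|p - 1|.
  by rewrite -[X in _ * X](ger0_norm p0) -normrM mulrBl mul1r mulVf // gt_eqF.
have : `|p - 1| <= F by rewrite ler_norml; apply/andP; split; nra.
lra.
Qed.

End ColumnErrorBound.

Section ColumnNormalization.
Variables (R : realType) (n r : nat).
Implicit Types (Y : 'M[R]_(n, r)).

Definition colnorm Y j : R := Num.sqrt (\sum_i Y i j ^+ 2).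
Definition colnormalize Y : 'M[R]_(n, r) := \matrix_(i, j) (Y i j / colnorm Y j).

Lemma sqr_colnorm Y j : colnorm Y j ^+ 2 = \sum_i Y i j ^+ 2.
Proof. by rewrite sqr_sqrtr // sumr_ge0 // => i _; exact: sqr_ge0. Qed.

Lemma colnormalize_Splus Y : Nonneg Y ->
  (forall j k, j != k -> \sum_i Y i j * Y i k = 0) -> (forall j, 0 < colnorm Y j) ->
  Splus (colnormalize Y).
Proof.
move=> Y0 Y_orth Y_norm; split=> [i j|]; first by rewrite mxE divr_ge0 // (ltW (Y_norm j)).
apply/StiefelP => j k; under eq_bigr do rewrite !mxE.
have [<-|jk] := eqVneq j k.
  under eq_bigr do rewrite -expr2 expr_div_n.
  by rewrite -mulr_suml -sqr_colnorm divff // sqrf_eq0 gt_eqF.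
under eq_bigr do rewrite mulrACA.
by rewrite -mulr_suml Y_orth // mul0r.
Qed.

Lemma frob2_sub_colnormalize Y : (forall j, 0 < colnorm Y j) ->
  frob2 (Y - colnormalize Y) = \sum_j (colnorm Y j - 1) ^+ 2.
Proof.
move=> Y_norm; rewrite /frob2 exchange_big /=; apply: eq_bigr => j _.
have cj0 : colnorm Y j != 0 by rewrite gt_eqF.
rewrite (eq_bigr (fun i => (1 - (colnorm Y j)^-1) ^+ 2 * Y i j ^+ 2)) => [|i _]; last first.
  by rewrite !mxE; field.
by rewrite -mulr_sumr -sqr_colnorm -exprMn mulrBl mul1r mulVf.
Qed.

End ColumnNormalization.

Section SupportParts.
Variables (R : realType) (n r : nat) (s : 'I_n -> 'I_r).
Implicit Types (X Xs : 'M[R]_(n, r)).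

Definition supp_part X : 'M[R]_(n, r) := \matrix_(i, j) (if j == s i then X i j else 0).
Definition offsupp_part X : 'M[R]_(n, r) := \matrix_(i, j) (if j == s i then 0 else X i j).

Lemma supp_offsupp_partE X : supp_part X + offsupp_part X = X.
Proof. by apply/matrixP => i j; rewrite !mxE; case: ifP; rewrite ?addr0 ?add0r. Qed.

Lemma rowsum_supp_split (F : R -> R) X i : F 0 = 0 ->
  \sum_j F (X i j) = F (X i (s i)) + \sum_j F (offsupp_part X i j).
Proof.
move=> F0; rewrite (bigD1 (s i)) //= [in RHS](bigD1 (s i)) //= mxE eqxx F0 add0r.
by congr (_ + _); apply: eq_bigr => j /negbTE js; rewrite mxE js.
Qed.

Lemma frob_offsupp_le X Xs : (forall i j, j != s i -> Xs i j = 0) ->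
  frob (offsupp_part X) <= frob (X - Xs).
Proof.
move=> Xs_off; rewrite !frobE ler_sqrt ?frob2_ge0 //.
apply: ler_sum => i _; apply: ler_sum => j _; rewrite !mxE.
by case: eqVneq => [_|js]; rewrite ?expr0n ?sqr_ge0 // Xs_off // subr0.
Qed.

Lemma vartheta_l1norm X : vartheta X = l1norm (negpart X).
Proof.
by apply: eq_bigr => i _; apply: eq_bigr => j _; rewrite mxE ger0_norm ?max0N_ge0.
Qed.

(* Expand [|X 1|^2 = |X|^2] row by row around the support entries [X i (s i)]. *)
Lemma Stiefel_offsupp_ineq X : Stiefel X ->
  \sum_i (2 * X i (s i) * \sum_j offsupp_part X i j - \sum_j offsupp_part X i j ^+ 2) <= 0.
Proof.
move=> SX; have rows : \sum_i ((\sum_j X i j) ^+ 2 - \sum_j X i j ^+ 2) = 0.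
  by rewrite sumrB Stiefel_rowsum_sqr // subrr.
rewrite -[Z in _ <= Z]rows; apply: ler_sum => i _.
rewrite (@rowsum_supp_split id X i) // (@rowsum_supp_split (fun x => x ^+ 2) X i) ?expr0n //=.
have := sqr_ge0 (\sum_j offsupp_part X i j); lra.
Qed.

Lemma offsupp_rowsum X i : 0 <= X i (s i) ->
  \sum_j offsupp_part X i j = \sum_j `|offsupp_part X i j| - 2 * \sum_j negpart X i j.
Proof.
move=> Xs0; rewrite mulr_sumr -sumrB; apply: eq_bigr => j _; rewrite !mxE.
case: eqVneq => [->|_]; first by rewrite max0N_eq0 // normr0 mulr0 subr0.
have [x0|x0] := leP 0 (X i j); first by rewrite max0N_eq0 // mulr0 subr0 ger0_norm.
by rewrite max0N_eqN ?(ltW x0) // ltr0_norm //; lra.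
Qed.

Lemma offsupp_l1norm_le X (mu d : R) : Stiefel X -> 0 <= d -> 3 * d <= mu ->
  (forall i, mu - d <= X i (s i)) -> (forall i j, j != s i -> `|X i j| <= d) ->
  mu * l1norm (offsupp_part X) <= 4 * vartheta X.
Proof.
move=> SX d0 dmu X_supp X_off.
set a := fun i => \sum_j `|offsupp_part X i j|.
set nu := fun i => \sum_j negpart X i j.
have a0 i : 0 <= a i by apply: sumr_ge0.
have nu0 i : 0 <= nu i by apply: sumr_ge0 => j _; rewrite mxE max0N_ge0.
have row_bound i :
    (2 * mu - 3 * d) * a i - 4 * nu i <=
    2 * X i (s i) * \sum_j offsupp_part X i j - \sum_j offsupp_part X i j ^+ 2.
  have Xs1 : X i (s i) <= 1 := le_trans (ler_norm _) (Stiefel_entry_le1 i (s i) SX).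
  have w_le : \sum_j offsupp_part X i j ^+ 2 <= d * a i.
    rewrite /a mulr_sumr; apply: ler_sum => j _; rewrite mxE.
    case: eqVneq => [_|js]; first by rewrite normr0 mulr0 expr0n.
    have := X_off i j js; rewrite -real_normK ?num_real //; have := normr_ge0 (X i j); nra.
  have := ler_wpM2r (a0 i) (X_supp i); have := ler_wpM2r (nu0 i) Xs1.
  rewrite offsupp_rowsum -/(a i) -/(nu i); last by have := X_supp i; lra.
  nra.
have := le_trans (ler_sum _ (fun i _ => row_bound i)) (Stiefel_offsupp_ineq SX).
rewrite sumrB -!mulr_sumr vartheta_l1norm.
have -> : l1norm (offsupp_part X) = \sum_i a i by [].
have -> : l1norm (negpart X) = \sum_i nu i.
  by apply: eq_bigr => i _; apply: eq_bigr => j _; rewrite ger0_norm // mxE max0N_ge0.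
have : 0 <= (mu - 3 * d) * \sum_i a i by rewrite mulr_ge0 ?subr_ge0 ?sumr_ge0.
lra.
Qed.

Lemma supp_part_orthogonal X j k : j != k ->
  \sum_i supp_part X i j * supp_part X i k = 0.
Proof.
move=> jk; apply: big1 => i _; rewrite !mxE.
case: eqVneq => [js|_]; case: eqVneq => [ks|_]; rewrite ?mul0r ?mulr0 //.
by rewrite js ks eqxx in jk.
Qed.

Lemma supp_part_near_Splus X : Stiefel X -> (forall i, 0 < X i (s i)) ->
  frob2 (offsupp_part X) < 1 ->
  exists2 Y, Splus Y & frob (supp_part X - Y) <= frob2 (offsupp_part X).
Proof.
move=> SX X_supp off_lt1.
set q := fun j => \sum_i offsupp_part X i j ^+ 2.
have q0 j : 0 <= q j by apply: sumr_ge0 => i _; exact: sqr_ge0.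
have sum_q : \sum_j q j = frob2 (offsupp_part X) by rewrite /frob2 exchange_big.
have q_lt1 j : q j < 1.
  by apply: le_lt_trans off_lt1; rewrite -sum_q; exact: ler_term_sum.
have colnorm2 j : colnorm (supp_part X) j ^+ 2 = 1 - q j.
  rewrite sqr_colnorm -(Stiefel_col_sqr j SX) /q -sumrB; apply: eq_bigr => i _.
  by rewrite !mxE; case: eqP => _; rewrite expr0n /= ?subr0 ?subrr.
have cpos j : 0 < colnorm (supp_part X) j.
  by rewrite sqrtr_gt0 -sqr_colnorm colnorm2 subr_gt0.
exists (colnormalize (supp_part X)).
  apply: colnormalize_Splus => // [i j|]; last exact: supp_part_orthogonal.
  by rewrite mxE; case: eqP => [->|_] //; exact: ltW.
rewrite frobE -(ger0_norm (frob2_ge0 (offsupp_part X))) -sqrtr_sqr ler_sqrt ?sqr_ge0 //.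
rewrite frob2_sub_colnormalize // -sum_q; apply: le_trans (sum_sqr_le_sqr_sum _ q0).
apply: ler_sum => j _; have := colnorm2 j; have := cpos j; have := q0 j; nra.
Qed.

End SupportParts.

Section RowErrorBound.
Variables (R : realType) (n r : nat).
Implicit Types (X Xs : 'M[R]_(n, r)).

Lemma local_error_bound_le Xs (K K' : R) :
  K <= K' -> local_error_bound Xs K -> local_error_bound Xs K'.
Proof.
move=> KK' [d d0 err]; exists d => // X SX XXs.
by apply: le_trans (err X SX XXs) _; rewrite ler_wpM2r ?frob_ge0.
Qed.

Lemma local_error_bound_supp Xs (s : 'I_n -> 'I_r) (mu : R) :
  (forall i j, j != s i -> Xs i j = 0) -> 0 < mu ->
  (forall i, mu <= Xs i (s i)) ->
  local_error_bound Xs (9 / 2 * Num.sqrt (n * r)%:R / mu).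
Proof.
move=> Xs_off mu0 Xs_supp.
exists (Num.min (mu / 3) (1 / 8)) => [|X SX]; first by rewrite lt_min !divr_gt0.
rewrite le_min => /andP[]; set d := frob (X - Xs) => d_mu d_8.
have d0 : 0 <= d := frob_ge0 _.
have XXs i j : `|X i j - Xs i j| <= d by have := entry_le_frob (X - Xs) i j; rewrite !mxE.
have X_supp i : mu - d <= X i (s i).
  by have := XXs i (s i); rewrite ler_norml => /andP[lo _]; have := Xs_supp i; lra.
have X_off i j : j != s i -> `|X i j| <= d by move=> js; have := XXs i j; rewrite Xs_off ?subr0.
set o := frob (offsupp_part s X).
have o_le : o <= d := frob_offsupp_le X Xs_off.
have o0 : 0 <= o := frob_ge0 _.
have [Y SY supp_Y] : exists2 Y, Splus Y & frob (supp_part s X - Y) <= o ^+ 2.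
  rewrite sqr_frob; apply: supp_part_near_Splus => // [i|].
    by have := X_supp i; lra.
  by rewrite -sqr_frob -/o; nra.
have dist_o : dist X (@Splus R n r) <= 9 / 8 * o.
  apply: le_trans (dist_le X SY) (le_trans (frob_sub_triangle X (supp_part s X) Y) _).
  rewrite -{1}(supp_offsupp_partE s X) [supp_part s X + _]addrC addrK -/o; nra.
have d3 : 3 * d <= mu by lra.
have key := offsupp_l1norm_le SX d0 d3 X_supp X_off.
have o_l1 := frob_le_l1norm (offsupp_part s X).
have neg_l1 := l1norm_le_frob (negpart X).
rewrite vartheta_l1norm in key.
set S := Num.sqrt (n * r)%:R; set F := frob (negpart X).
have -> : 9 / 2 * S / mu * F = 9 / 8 * (4 * (S * F) / mu) by field; rewrite gt_eqF.
apply: le_trans dist_o _; rewrite ler_pM2l //.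
apply: le_trans o_l1 _; rewrite ler_pdivlMr // mulrC (le_trans key) //.
by rewrite ler_pM2l.
Qed.

Lemma Splus_support_fun Xs : Splus Xs -> (forall i, exists j, Xs i j != 0) ->
  exists s : 'I_n -> 'I_r,
    (forall i, Xs i (s i) != 0) /\ forall i j, j != s i -> Xs i j = 0.
Proof.
move=> SXs /choice[s Xs_s]; exists s; split=> // i j js.
by apply/eqP; apply: contraNT js => Xij; rewrite (Splus_row_support SXs Xij (Xs_s i)).
Qed.

Lemma min_nonzero_entry_le Xs i j : Nonneg Xs -> Xs i j != 0 ->
  min_nonzero_entry Xs <= Xs i j.
Proof.
move=> Xs0 Xij; apply: ge_inf; last by exists i, j.
by exists 0 => _ [k [l [-> _]]]; exact: Xs0.
Qed.

Lemma min_nonzero_entry_gt0 Xs i0 j0 : Nonneg Xs -> Xs i0 j0 != 0 ->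
  0 < min_nonzero_entry Xs.
Proof.
move=> Xs0 Xij0.
pose m := \big[Num.min/1]_(p : 'I_n * 'I_r | Xs p.1 p.2 != 0) Xs p.1 p.2.
have m_gt0 : 0 < m.
  elim/big_ind: m => // [x y|p Xp]; first by rewrite lt_min => -> ->.
  by rewrite lt0r Xp Xs0.
apply: lt_le_trans m_gt0 _; apply: lb_le_inf; first by exists (Xs i0 j0), i0, j0.
move=> _ [i [j [-> Xij]]].
by rewrite /m (bigD1 (i, j)) //= ge_min lexx.
Qed.

Lemma local_error_bound_rows Xs : (0 < n)%N -> Splus Xs ->
  (forall i, exists j, Xs i j != 0) ->
  local_error_bound Xs (9 / 2 * Num.sqrt (n * r)%:R / min_nonzero_entry Xs).
Proof.
move=> n0 SXs rows; have [s [Xs_s Xs_off]] := Splus_support_fun SXs rows.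
apply: local_error_bound_supp Xs_off _ _ => //.
  exact: min_nonzero_entry_gt0 SXs.1 (Xs_s (Ordinal n0)).
by move=> i; exact: min_nonzero_entry_le SXs.1 (Xs_s i).
Qed.

End RowErrorBound.

Lemma error_bound_const_le (R : realType) (n r : nat) (mu : R) :
  0 < mu -> (r < n)%N -> (1 < r)%N ->
  9 / 2 * Num.sqrt (n * r)%:R / mu <=
  21 / 10 * Num.sqrt r%:R * (1 + 3 * (r * (n - r))%N%:R) / mu.
Proof.
move=> mu0 rn r1; rewrite ler_pM2r ?invr_gt0 // natrM sqrtrM ?ler0n //.
set sn := Num.sqrt n%:R; set sr := Num.sqrt r%:R; set K := (r * (n - r))%N%:R.
have nK : n%:R <= K + 1 :> R by rewrite -(natrD R (r * (n - r)) 1) ler_nat; nia.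
have n3 : 3 <= n%:R :> R by rewrite (ler_nat R 3 n); lia.
have sn2 : sn ^+ 2 = n%:R by rewrite sqr_sqrtr ?ler0n.
have sn_le : sn <= n%:R by have := sqrtr_ge0 (n%:R : R); nra.
have : 9 / 2 * sn <= 21 / 10 * (1 + 3 * K) by lra.
move/(ler_wpM2r (sqrtr_ge0 (r%:R : R))); rewrite -/sr.
lra.
Qed.

Section ExactPenalty.
Variables (R : realType) (n r : nat) (f : 'M[R]_(n, r) -> R) (g : R) (Xs : 'M[R]_(n, r)).
Hypotheses (rn : (r <= n)%N) (g_gt0 : 0 < g) (Xs_min : global_min f Xs).
Hypothesis f_cont : forall X, Stiefel X -> {for X, continuous f}.
Implicit Types (X Y : 'M[R]_(n, r)).

Definition exact_penalty_at (rho : R) Y : Prop :=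
  f Xs <= f Y + rho * moreau g Y /\
  (f Y + rho * moreau g Y <= f Xs -> global_min f Y).

Definition eventually_exact_near X : Prop := exists rho0 : R,
  \forall Y \near X, forall rho, rho0 <= rho -> Stiefel Y -> exact_penalty_at rho Y.

Lemma exact_penalty_at_gt rho Y : f Xs < f Y + rho * moreau g Y -> exact_penalty_at rho Y.
Proof. by move=> lt; split=> [|le]; [exact: ltW | have := lt_le_trans lt le; rewrite ltxx]. Qed.

Lemma global_min_value Y : global_min f Y -> f Y = f Xs.
Proof.
by move=> [SY Y_min]; apply/le_anti; rewrite (Xs_min.2 Y SY) Y_min //; case: Xs_min.
Qed.

Lemma moreau_ge_negpart_Stiefel Y : Stiefel Y ->
  (2 * Num.max g 1)^-1 * frob2 (negpart Y) <= moreau g Y.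
Proof.
move=> SY; apply: moreau_ge_negpart => //; first by rewrite le_max lexx.
move=> i j.
have := Stiefel_entry_le1 i j SY; rewrite ler_norml => /andP[lo _].
by apply: le_trans lo; rewrite lerN2 le_max lexx orbT.
Qed.

Lemma moreau_eq0_Splus Y : Stiefel Y -> moreau g Y = 0 -> Splus Y.
Proof.
move=> SY e0; split=> //; apply/Nonneg_negpart/le_anti; rewrite frob2_ge0 andbT.
have := moreau_ge_negpart_Stiefel SY; rewrite e0 pmulr_rle0 //.
by rewrite invr_gt0 mulr_gt0 // lt_max ltr01 orbT.
Qed.

Lemma near_frob_sub_le X (d : R) : 0 < d -> \forall Y \near X, frob (Y - X) <= d.
Proof.
move=> d0; have : frob (X - X) < d by rewrite subrr frob0.
move=> /(cvgr_lt _ (@continuous_frob_sub _ _ _ X X)); apply: filterS => Y.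
by rewrite frob_distC => /ltW.
Qed.

Lemma eventually_exact_near_global_min X : global_min f X ->
  (exists d' L', growth_cond f X d' L') -> (exists2 K, 0 <= K & local_error_bound X K) ->
  eventually_exact_near X.
Proof.
move=> X_min [d' [L' growth]] [K K0 err_bound]; have [SX X_le] := X_min.
have L'0 : 0 < L' by case: growth => _ [].
have [d [d0 penalty]] :=
  penalty_ineq_near rn g_gt0 SX ltr01 (fun Y SY _ => X_le Y SY) growth K0 err_bound.
set c := 2 * g * K ^+ 2 * L' in penalty.
have c0 : 0 <= c by rewrite !mulr_ge0 ?sqr_ge0 ?(ltW g_gt0) ?(ltW L'0).
exists (c + 1); near=> Y => rho rho_ge SY.
have YX : frob (Y - X) <= d by near: Y; exact: near_frob_sub_le.
have := penalty Y SY YX; rewrite (global_min_value X_min).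
have e0 := moreau_ge0 g_gt0 Y.
have : c * moreau g Y <= rho * moreau g Y by rewrite ler_wpM2r //; lra.
split=> [|le_Xs]; first lra.
have eY : moreau g Y = 0 by apply/le_anti; rewrite e0 andbT; nra.
split=> [|Z SZ]; first exact: moreau_eq0_Splus.
by apply: le_trans (Xs_min.2 Z SZ); move: le_Xs; rewrite eY mulr0 addr0.
Unshelve. all: by end_near.
Qed.

Lemma eventually_exact_near_Splus X : Stiefel X -> Splus X -> ~ global_min f X ->
  eventually_exact_near X.
Proof.
move=> SX SpX not_min.
have fX : f Xs < f X.
  rewrite ltNge; apply/negP => fX; apply: not_min; split=> // Z SZ.
  exact: le_trans fX (Xs_min.2 Z SZ).
exists 0; near=> Y => rho rho0 _; apply: exact_penalty_at_gt.
have : f Xs < f Y by near: Y; exact: (cvgr_gt _ (f_cont SX) _ fX).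
by have := mulr_ge0 rho0 (moreau_ge0 g_gt0 Y); lra.
Unshelve. all: by end_near.
Qed.

(* Away from S_+ the envelope is bounded below by a multiple of [|X_-|^2 > 0]. *)
Lemma eventually_exact_near_infeasible X : Stiefel X -> ~ Splus X ->
  eventually_exact_near X.
Proof.
move=> SX not_Splus; set h := frob2 (negpart X); set K := Num.max g 1.
have K0 : 0 < K by rewrite lt_max ltr01 orbT.
have h0 : 0 < h.
  rewrite lt0r frob2_ge0 andbT; apply/eqP => /Nonneg_negpart X0.
  exact: not_Splus.
have h2 : h / 2 < h by lra.
exists (4 * K * `|f Xs - f X + 1| / h); near=> Y => rho rho_ge SY.
apply: exact_penalty_at_gt.
have fY : f X - 1 < f Y.
  by near: Y; apply: (cvgr_gt _ (f_cont SX)); lra.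
have hY : h / 2 < frob2 (negpart Y).
  by near: Y; exact: (cvgr_gt _ (@continuous_frob2_negpart _ _ _ X) _ h2).
have eY : h / (4 * K) <= moreau g Y.
  apply: le_trans (moreau_ge_negpart_Stiefel SY); rewrite -/K.
  rewrite (_ : h / (4 * K) = (2 * K)^-1 * (h / 2)); last by field; rewrite gt_eqF.
  by rewrite ler_pM2l ?invr_gt0 ?mulr_gt0 //; exact: ltW.
have : `|f Xs - f X + 1| <= rho * moreau g Y.
  rewrite [X in X <= _](_ : _ = 4 * K * `|f Xs - f X + 1| / h * (h / (4 * K))); last first.
    by field; rewrite !gt_eqF.
  have rho0_ge0 : 0 <= 4 * K * `|f Xs - f X + 1| / h.
    by rewrite divr_ge0 ?mulr_ge0 ?(ltW K0) ?(ltW h0).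
  have hK0 : 0 <= h / (4 * K) by rewrite divr_ge0 ?mulr_ge0 ?(ltW K0) ?(ltW h0).
  exact: le_trans (ler_wpM2r hK0 rho_ge) (ler_wpM2l (le_trans rho0_ge0 rho_ge) eY).
have := ler_norm (f Xs - f X + 1); lra.
Unshelve. all: by end_near.
Qed.

Lemma eventually_exact_near_Stiefel X : Stiefel X ->
  (forall X, global_min f X -> exists d' L', growth_cond f X d' L') ->
  (forall X, global_min f X -> exists2 K, 0 <= K & local_error_bound X K) ->
  eventually_exact_near X.
Proof.
move=> SX growth err_bound.
have [X_min|not_min] := pselect (global_min f X).
  exact: eventually_exact_near_global_min (growth X X_min) (err_bound X X_min).
have [SpX|not_Splus] := pselect (Splus X).
  exact: eventually_exact_near_Splus.
exact: eventually_exact_near_infeasible.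
Qed.

(* Compactness of St(n,r) turns the local penalty thresholds into a uniform one. *)
Lemma eventually_exact :
  (forall X, global_min f X -> exists d' L', growth_cond f X d' L') ->
  (forall X, global_min f X -> exists2 K, 0 <= K & local_error_bound X K) ->
  exists rho0 : R, forall rho, rho0 < rho -> forall Y, Stiefel Y -> exact_penalty_at rho Y.
Proof.
move=> growth err_bound.
pose P rho Y := Stiefel Y -> exact_penalty_at rho Y.
have local X : Stiefel X -> \forall Y \near X & rho \near pinfty_nbhs R, P rho Y.
  move=> SX; have [rho0 near_X] := eventually_exact_near_Stiefel SX growth err_bound.
  exists ([set Y | forall rho, rho0 <= rho -> Stiefel Y -> exact_penalty_at rho Y],
          [set rho | rho0 < rho]).
    by split=> //=; exists rho0; split=> //; exact: num_real.
  by move=> [Y rho] [/= Y_near rho_gt] SY; apply: Y_near => //; exact: ltW.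
have [rho0 [_ exact_rho]] :=
  (compact_near_coveringP _).1 (@compact_Stiefel R n r) R (pinfty_nbhs R) P _ local.
by exists rho0 => rho rho_gt Y SY; exact: exact_rho.
Qed.

End ExactPenalty.

Section Conclusions.
Variables (R : realType) (n r : nat) (f : 'M[R]_(n, r) -> R) (g : R).
Hypotheses (rn : (r <= n)%N) (g_gt0 : 0 < g).
Implicit Types (X Xs : 'M[R]_(n, r)).

Lemma global_min_local_min X : global_min f X -> local_min f X.
Proof. by move=> [SX X_le]; split=> //; exists 1; split=> // Y SY _; exact: X_le. Qed.

Lemma concl_of_local_min (ismin : 'M[R]_(n, r) -> Prop) :
  (forall X, ismin X -> local_min f X) ->
  ((r < n)%N -> (1 < r)%N -> forall X, ismin X -> forall i, exists j, X i j != 0) ->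
  concl ismin f g.
Proof.
move=> ismin_local rows Xs Xs_min d' L' growth.
have [SXs [e [e0 Xs_le]]] := ismin_local Xs Xs_min.
split=> [_ kappa' kappa'_gt0 kappa'_bound|[r_lt_n r_gt1] /=].
  apply: penalty_ineq_near rn g_gt0 SXs e0 Xs_le growth (ltW kappa'_gt0) _.
  exists 1 => // X SX _; apply: le_trans (kappa'_bound X SX) _.
  by rewrite ler_pM2l //; exact: dist_Nonneg_le.
have n_gt0 : (0 < n)%N := leq_ltn_trans (leq0n r) r_lt_n.
have err_bound := local_error_bound_rows n_gt0 SXs (rows r_lt_n r_gt1 Xs Xs_min).
have [j0 Xs_j0] := rows r_lt_n r_gt1 Xs Xs_min (Ordinal n_gt0).
have mu_gt0 := min_nonzero_entry_gt0 SXs.1 Xs_j0.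
have kappa_ge := error_bound_const_le mu_gt0 r_lt_n r_gt1.
have K_ge0 : 0 <= 9 / 2 * Num.sqrt (n * r)%:R / min_nonzero_entry Xs.
  by rewrite divr_ge0 ?mulr_ge0 ?sqrtr_ge0 ?(ltW mu_gt0).
have [d [d_gt0 ineq]] := penalty_ineq_near rn g_gt0 SXs e0 Xs_le growth
  (le_trans K_ge0 kappa_ge) (local_error_bound_le kappa_ge err_bound).
by exists d; split=> // eps _ X SX _; exact: ineq.
Qed.

Lemma exact_penalty : (forall X, Stiefel X -> {for X, continuous f}) ->
  (forall X, global_min f X -> exists d' L', growth_cond f X d' L') ->
  (forall X, global_min f X -> exists2 K, 0 <= K & local_error_bound X K) ->
  exists rho_hat : R, 0 < rho_hat /\ forall rho : R, rho_hat <= rho ->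
    forall X, penalty_global_min f g rho X <-> global_min f X.
Proof.
move=> f_cont growth err_bound.
have [Xs Xs_min] : exists Xs, global_min f Xs.
  by apply: global_min_exists rn _ => X /set_mem [_ SX]; exact: f_cont.
have [rho0 exact_rho] := eventually_exact rn g_gt0 Xs_min f_cont growth err_bound.
exists (Num.max (rho0 + 1) 1); split=> [|rho]; first by rewrite lt_max ltr01 orbT.
rewrite ge_max => /andP[rho_ge _] X.
have rho_gt : rho0 < rho by lra.
have {}exact_rho := exact_rho rho rho_gt.
have [[Xs0 SXs] _] := Xs_min; have eXs := moreau_Nonneg g_gt0 Xs0.
split=> [[SX X_le]|X_min].
  by apply: (exact_rho X SX).2; have := X_le Xs SXs; rewrite eXs mulr0 addr0.
have [[X0 SX] _] := X_min.
split=> // Y SY; rewrite (moreau_Nonneg g_gt0 X0) mulr0 addr0 (global_min_value Xs_min X_min).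
exact: (exact_rho Y SY).1.
Qed.

End Conclusions.

Lemma global_min_error_bound (R : realType) (n r : nat) (f : 'M[R]_(n, r) -> R) X :
  (0 < r)%N -> (r <= n)%N ->
  ((r < n)%N -> (1 < r)%N -> forall X, global_min f X -> forall i, exists j, X i j != 0) ->
  global_min f X -> exists2 K, 0 <= K & local_error_bound X K.
Proof.
move=> r_gt0 rn rows X_min; have [SX _] := X_min.
have [r1|r_neq1] := eqVneq r 1%N.
  by subst r; exists 2 => //; exact: local_error_bound_col.
have r_gt1 : (1 < r)%N by rewrite ltn_neqAle eq_sym r_neq1.
have X_rows : forall i, exists j, X i j != 0.
  have [r_lt_n|] := ltnP r n; first exact: rows r_lt_n r_gt1 X X_min.
  by move=> nr; apply: Stiefel_square_row_neq0 SX.2; lia.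
have n_gt0 : (0 < n)%N := leq_trans r_gt0 rn.
have [j0 Xj0] := X_rows (Ordinal n_gt0).
exists (9 / 2 * Num.sqrt (n * r)%:R / min_nonzero_entry X).
  by rewrite divr_ge0 ?mulr_ge0 ?sqrtr_ge0 ?(ltW (min_nonzero_entry_gt0 SX.1 Xj0)).
exact: local_error_bound_rows.
Qed.

Theorem theorem3p10 (R : realType) (n r : nat) (O : set 'M[R]_(n, r))
    (f : 'M[R]_(n, r) -> R) (gamma : R) :
  (1 <= r)%N -> (r <= n)%N ->
  open O -> @Stiefel R n r `<=` O -> C1_on O f -> 0 < gamma ->
  (hyps (global_min f) f ->
     concl (global_min f) f gamma /\
     exists rho_hat : R, 0 < rho_hat /\ forall rho : R, rho_hat <= rho ->
       forall X, penalty_global_min f gamma rho X <-> global_min f X)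
  /\
  (hyps (local_min f) f -> concl (local_min f) f gamma).
Proof.
move=> r_gt0 rn _ St_O [f_diff _] gamma_gt0.
have f_cont X : Stiefel X -> {for X, continuous f}.
  by move=> SX; apply: differentiable_continuous; exact/f_diff/St_O.
split=> [[rows growth]|[rows _]]; last exact: concl_of_local_min.
split; first exact: concl_of_local_min (@global_min_local_min _ _ _ f) rows.
apply: exact_penalty => // X; exact: global_min_error_bound.
Qed.
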